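(* Let $V$ be an $n$-dimensional vector space over a field of characteristic zero, let $A^{a_1\dots a_p}$ and $B_{a_1\dots a_p}$ be $p$-forms with $A$ simple, and assume $n\neq 2p$. Let $T=T^a{}_b\{A,B\}=A^{ac_2\dots c_p}B_{bc_2\dots c_p}-\frac{1}{2p}A^{c_1\dots c_p}B_{c_1\dots c_p}\delta^a_b$. Then for every positive integer $k$, $$[T^k]=\begin{cases}\dfrac{n}{(n-2p)^k}[T]^k & \text{if $k$ is even},\\[2mm] \dfrac{1}{(n-2p)^{k-1}}[T]^k & \text{if $k$ is odd}.\end{cases}$$
   Context: Index-free notation: $T^k$ is the $k$-fold composition of the $(1,1)$-tensor $T^a{}_b$ with itself and $[X]=X^c{}_c$ denotes the trace. A $p$-form $A$ is simple if $A^{a_1\dots a_p}=u^{[a_1}\cdots w^{a_p]}$ for some vectors $u,\dots,w$. No metric is assumed. *)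

From HB Require Import structures.
From mathcomp Require Import all_boot all_order all_algebra all_fingroup.
Set Implicit Arguments. Unset Strict Implicit. Unset Printing Implicit Defensive.
Import Order.TTheory GRing.Theory Num.Theory.
Local Open Scope ring_scope.

(* Components of a rank-p tensor on an n-dimensional space, in a fixed basis.
   Only the values on index sequences of length p are meaningful. *)
Definition tensor (F : Type) (n : nat) := seq 'I_n -> F.

Definition alternating (F : pzRingType) (n p : nat) (A : tensor F n) : Prop :=
  forall (s : p.-tuple 'I_n) (sigma : 'S_p),
    A [tuple tnth s (sigma i) | i < p] = (-1) ^+ (odd_perm sigma) * A s.

Definition simple (F : fieldType) (n p : nat) (A : tensor F n) : Prop :=
  exists u : 'I_p -> 'I_n -> F,
    forall s : p.-tuple 'I_n,
      A s = (p`!%:R)^-1 *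
            \sum_(sigma : 'S_p) (-1) ^+ (odd_perm sigma) *
               \prod_(i < p) u i (tnth s (sigma i)).

Definition Tmat (F : fieldType) (n p : nat) (A B : tensor F n) : 'M[F]_n :=
  \matrix_(a < n, b < n)
    (\sum_(c : (p.-1).-tuple 'I_n) A (a :: c) * B (b :: c)
     - ((2 * p)%:R)^-1 * (\sum_(c : p.-tuple 'I_n) A c * B c) * (a == b)%:R).

From HB Require Import structures.
From mathcomp Require Import all_boot all_order all_algebra all_fingroup.
From mathcomp Require Import ring.
Set Implicit Arguments. Unset Strict Implicit. Unset Printing Implicit Defensive.
Import Order.TTheory GRing.Theory Num.Theory.
Local Open Scope ring_scope.

(* Write M^a_b = A^{a c_2..c_p} B_{b c_2..c_p}, so that T = M - [M]/(2p) I.  For a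
   simple A = u_1 ^ ... ^ u_p, M is a signed sum of the rank-one maps u_i (x) w_i with
   w_i = B(_, u_1, ..^i.., u_p), and since B is alternating w_i(u_j) vanishes unless
   i = j.  This gives M^2 = ([M]/p) M, hence T^2 = ([M]/(2p))^2 I, while
   [T] = [M] (2p - n)/(2p).  So T^2 = ([T]/(n - 2p))^2 I and [T^k] follows by parity. *)

Lemma sum_tuple_cons (V : nmodType) (T : finType) m (f : m.+1.-tuple T -> V) :
  \sum_t f t = \sum_x \sum_(c : m.-tuple T) f [tuple of x :: c].
Proof.
rewrite pair_big /= (reindex (fun xc : T * m.-tuple T => [tuple of xc.1 :: xc.2])) //.
exists (fun t => (thead t, [tuple of behead t])) => [[x c] _ | t _] /=.
  by congr pair; apply: val_inj.
by rewrite [RHS]tuple_eta.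
Qed.

Lemma sum_perm_ord0_eq m (x : 'I_m.+1) :
  (\sum_(s : 'S_m.+1) (s ord0 == x) = m`!)%N.
Proof.
have sum_eq y : (\sum_(s : 'S_m.+1) (s ord0 == y) = \sum_(s : 'S_m.+1) (s ord0 == ord0))%N.
  rewrite (reindex_inj (@mulIg _ (tperm ord0 y))) /=.
  apply: eq_bigr => s _.
  by rewrite permM -[X in _ == X](tpermL ord0 y) (inj_eq perm_inj).
have : (\sum_(y : 'I_m.+1) \sum_(s : 'S_m.+1) (s ord0 == y) = m.+1`!)%N.
  rewrite exchange_big /= -card_Sn -sum1_card; apply: eq_bigr => s _.
  by rewrite (bigD1 (s ord0)) //= eqxx big1 // => y /negbTE; rewrite eq_sym => ->.
rewrite (eq_bigr _ (fun y _ => sum_eq y)) sum_nat_const card_ord factS sum_eq.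
by move/eqP; rewrite eqn_pmul2l // => /eqP.
Qed.

Section EvalForm.
Variables (F : comPzRingType) (n q : nat) (B : tensor F n).

Definition eval_form (w : 'I_q.+1 -> 'I_n -> F) : F :=
  \sum_(t : q.+1.-tuple 'I_n) (\prod_i w i (tnth t i)) * B t.

Lemma eq_eval_form w w' : w =2 w' -> eval_form w = eval_form w'.
Proof. by move=> eq_w; apply: eq_bigr => t _; congr (_ * _); apply: eq_bigr. Qed.

Lemma eval_form_cons w : eval_form w = \sum_a w ord0 a *
  \sum_(c : q.-tuple 'I_n) (\prod_(j < q) w (lift ord0 j) (tnth c j)) * B (a :: c).
Proof.
rewrite /eval_form sum_tuple_cons; apply: eq_bigr => a _.
rewrite mulr_sumr; apply: eq_bigr => c _.
rewrite big_ord_recl tnth0 -mulrA; congr (_ * (_ * _)).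
by apply: eq_bigr => j _; rewrite tnthS.
Qed.

Hypothesis B_alt : alternating q.+1 B.

Lemma eval_form_perm w (s : 'S_q.+1) :
  eval_form (fun i => w (s i)) = (-1) ^+ s * eval_form w.
Proof.
rewrite /eval_form mulr_sumr.
rewrite (reindex (fun t : q.+1.-tuple 'I_n => [tuple tnth t (s i) | i < q.+1])) /=.
  apply: eq_bigr => t _; rewrite B_alt mulrCA; congr (_ * (_ * _)).
  rewrite [RHS](reindex_inj (@perm_inj _ s)) /=.
  by apply: eq_bigr => i _; rewrite tnth_mktuple.
exists (fun t : q.+1.-tuple 'I_n => [tuple tnth t ((s^-1)%g i) | i < q.+1]) => t _.
  by apply: eq_from_tnth => i; rewrite !tnth_mktuple permKV.
by apply: eq_from_tnth => i; rewrite !tnth_mktuple permK.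
Qed.

Lemma eval_form_alternate w (i j : 'I_q.+1) : GRing.lreg (2%:R : F) ->
  i != j -> w i =1 w j -> eval_form w = 0.
Proof.
move=> reg2 neq_ij eq_w; apply: reg2; rewrite mulr0 mulr_natl mulr2n.
have := eval_form_perm w (tperm i j); rewrite odd_tperm neq_ij expr1 mulN1r.
have -> : eval_form (fun k => w (tperm i j k)) = eval_form w.
  by apply: eq_eval_form => k a; case: tpermP => // ->.
by move=> {1}->; rewrite addNr.
Qed.

End EvalForm.

Definition contraction_mx (F : fieldType) n p (A B : tensor F n) : 'M[F]_n :=
  \matrix_(a, b) \sum_(c : (p.-1).-tuple 'I_n) A (a :: c) * B (b :: c).

Lemma mxtrace_contraction (F : fieldType) n q (A B : tensor F n) :
  \tr (contraction_mx q.+1 A B) = \sum_(t : q.+1.-tuple 'I_n) A t * B t.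
Proof. by rewrite sum_tuple_cons; apply: eq_bigr => a _; rewrite mxE. Qed.

Lemma TmatE (F : fieldType) n q (A B : tensor F n) :
  Tmat q.+1 A B = contraction_mx q.+1 A B
                  - (\tr (contraction_mx q.+1 A B) / (2 * q.+1)%:R)%:M.
Proof.
apply/matrixP => a b; rewrite !mxE mxtrace_contraction.
by rewrite mulr_natr [_^-1 * _]mulrC.
Qed.

Lemma natf_subr_neq0 (F : fieldType) (m n : nat) :
  [pchar F] =i pred0 -> m != n -> (m%:R - n%:R : F) != 0.
Proof.
move=> /pcharf0P char0 neq_mn; have [le_nm|lt_mn] := leqP n m.
  rewrite -natrB // char0 subn_eq0 -ltnNge ltn_neqAle le_nm andbT eq_sym.
  exact: neq_mn.
rewrite -opprB -natrB; last exact: ltnW.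
by rewrite oppr_eq0 char0 subn_eq0 -ltnNge; exact: lt_mn.
Qed.

Lemma sqr_subr_scalar_mx (R : comPzRingType) n (M : 'M[R]_n) c :
  M * M = (c *+ 2) *: M -> (M - c%:M) * (M - c%:M) = (c ^+ 2)%:M.
Proof.
move=> sqrM; rewrite mulrBl !mulrBr sqrM -!mulmxE mul_mx_scalar mul_scalar_mx.
by rewrite -scalar_mxM scalerDl addrK opprB addrC subrK.
Qed.

Lemma mxtrace_exp_sqr_scalar (R : comPzRingType) n (T : 'M[R]_n) d k :
  T * T = d%:M ->
  \tr (T ^+ k) = if odd k then d ^+ k./2 * \tr T else d ^+ k./2 *+ n.
Proof.
move=> sqrT; have T_exp_double m : T ^+ m.*2 = (d ^+ m)%:M.
  elim: m => [|m IH]; first by rewrite expr0 -scalemx1 scale1r.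
  by rewrite doubleS !exprS mulrA sqrT IH -mulmxE -scalar_mxM.
rewrite -[in T ^+ k](odd_double_half k); case: (odd k).
  by rewrite add1n exprS T_exp_double -mulmxE mul_mx_scalar mxtraceZ.
by rewrite T_exp_double mxtrace_scalar.
Qed.

Section SimpleContraction.
Variables (F : fieldType) (n q : nat) (A B : tensor F n).
Variable u : 'I_q.+1 -> 'I_n -> F.
Hypothesis char0 : [pchar F] =i pred0.
Hypothesis B_alt : alternating q.+1 B.
Hypothesis A_simple : forall s : q.+1.-tuple 'I_n,
  A s = (q.+1`!%:R)^-1 * \sum_(sigma : 'S_q.+1) (-1) ^+ (odd_perm sigma) *
                         \prod_(i < q.+1) u i (tnth s (sigma i)).

Local Notation sg s := ((-1) ^+ odd_perm s : F).
Local Notation M := (contraction_mx q.+1 A B).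

Let natr_neq0 m : (m%:R : F) != 0 = (m != 0%N).
Proof. by move/pcharf0P: char0 => ->. Qed.

Lemma simple_formE (s : q.+1.-tuple 'I_n) : A s = (q.+1`!%:R)^-1 *
  \sum_(sigma : 'S_q.+1) sg sigma * \prod_i u (sigma i) (tnth s i).
Proof.
rewrite A_simple (reindex_inj (@invg_inj _)) /=; congr (_ * _).
apply: eq_bigr => sigma _; rewrite odd_permV; congr (_ * _).
rewrite (reindex_inj (@perm_inj _ sigma)) /=.
by apply: eq_bigr => i _; rewrite permK.
Qed.

(* [tail_form s] is the covector B(_, u_(s 1), ..., u_(s q)). *)
Definition tail_form (s : 'S_q.+1) (b : 'I_n) : F :=
  \sum_(c : q.-tuple 'I_n) (\prod_(j < q) u (s (lift ord0 j)) (tnth c j)) * B (b :: c).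

Lemma contraction_mx_simpleE a b : M a b =
  (q.+1`!%:R)^-1 * \sum_(s : 'S_q.+1) sg s * (u (s ord0) a * tail_form s b).
Proof.
rewrite mxE.
transitivity (\sum_(c : q.-tuple 'I_n) A [tuple of a :: c] * B (b :: c)) => //.
under eq_bigr => c _ do rewrite simple_formE -mulrA mulr_suml.
rewrite -mulr_sumr exchange_big /=; congr (_ * _); apply: eq_bigr => s _.
rewrite /tail_form !mulr_sumr; apply: eq_bigr => c _.
rewrite big_ord_recl tnth0 !mulrA; congr (_ * _ * _).
by apply: eq_bigr => j _; rewrite tnthS.
Qed.

Lemma tail_form_contract (s t : 'S_q.+1) :
  \sum_b tail_form s b * u (t ord0) b = (s ord0 == t ord0)%:R * (sg s * eval_form B u).
Proof.
have -> : \sum_b tail_form s b * u (t ord0) b =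
          eval_form B (fun i => if i == ord0 then u (t ord0) else u (s i)).
  by rewrite eval_form_cons; apply: eq_bigr => a _; rewrite mulrC.
have [<-|neq_st] := eqVneq (s ord0) (t ord0).
  rewrite mul1r -eval_form_perm //; apply: eq_eval_form => i a.
  by case: eqP => [->|].
rewrite mul0r (@eval_form_alternate _ _ _ _ _ _ ord0 ((s^-1)%g (t ord0))) //.
- by apply: mulfI; rewrite natr_neq0.
- by apply: contraNneq neq_st => /(congr1 s); rewrite permKV => ->.
- by move=> a; rewrite eqxx; case: eqP => // _; rewrite permKV.
Qed.

Let sign_sqr (s : 'S_q.+1) : sg s * sg s = 1.
Proof. by rewrite -signr_addb addbb. Qed.

Let fact_neq0 m : (m`!%:R : F) != 0.
Proof. by rewrite natr_neq0 -lt0n fact_gt0. Qed.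

Lemma mxtrace_contraction_simple : \tr M = eval_form B u.
Proof.
rewrite /mxtrace; under eq_bigr => a _ do rewrite contraction_mx_simpleE.
rewrite -mulr_sumr exchange_big /=.
under eq_bigr => s _ do rewrite -mulr_sumr (eq_bigr _ (fun a _ => mulrC _ _))
  tail_form_contract eqxx mul1r mulrA sign_sqr mul1r.
by rewrite sumr_const card_Sn -[eval_form B u *+ _]mulr_natr mulrCA mulVf ?mulr1.
Qed.

Lemma contraction_mx_sqr : M *m M = (eval_form B u / q.+1%:R) *: M.
Proof.
set k : F := (q.+1`!%:R)^-1; set beta := eval_form B u.
apply/matrixP => a d; rewrite [LHS]mxE [RHS]mxE contraction_mx_simpleE.
under eq_bigr => b _ do rewrite !contraction_mx_simpleE.
transitivity (k * k * \sum_(t : 'S_q.+1) \sum_(s : 'S_q.+1)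
    sg t * tail_form t d * (sg s * u (s ord0) a) * \sum_b tail_form s b * u (t ord0) b).
  under eq_bigr => b _ do rewrite mulrACA big_distrlr /=.
  rewrite -mulr_sumr; congr (_ * _).
  rewrite exchange_big /=; under eq_bigr => s _ do rewrite exchange_big /=.
  rewrite exchange_big /=; apply: eq_bigr => t _; apply: eq_bigr => s _.
  rewrite mulr_sumr; apply: eq_bigr => b _.
  move: (sg s) (sg t) (u _ a) (u _ b) (tail_form s b) (tail_form t d) => ? ? ? ? ? ?.
  ring.
(* Only the q! permutations s with s 0 = t 0 survive the contraction over b. *)
transitivity (k * k * \sum_(t : 'S_q.+1) sg t * tail_form t d *
                                          (q`!%:R * (u (t ord0) a * beta))).
  congr (_ * _); apply: eq_bigr => t _.
  rewrite -(sum_perm_ord0_eq (t ord0)) natr_sum mulr_suml mulr_sumr.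
  apply: eq_bigr => s _; rewrite tail_form_contract.
  rewrite -/beta -mulrA; congr (_ * _).
  have [<-|_] := eqVneq (s ord0) (t ord0); last by rewrite !mul0r mulr0.
  by rewrite !mul1r mulrACA sign_sqr mul1r.
have kq : k * q`!%:R = (q.+1%:R)^-1 by rewrite /k factS natrM invfM mulfVK.
rewrite (eq_bigr (fun t => q`!%:R * beta * (sg t * (u (t ord0) a * tail_form t d)))).
  rewrite -mulr_sumr -/k -{}kq; move: k (q`!%:R) beta (\sum_t _) => *; ring.
by move=> t _; move: (sg t) (tail_form t d) (u _ a) => *; ring.
Qed.

Lemma Tmat_sqr : n != (2 * q.+1)%N ->
  Tmat q.+1 A B * Tmat q.+1 A B =
  ((\tr (Tmat q.+1 A B) / (n%:R - (2 * q.+1)%:R)) ^+ 2)%:M.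
Proof.
move=> n_neq; set c := \tr M / (2 * q.+1)%:R.
have two_p_neq0 : (2 * q.+1)%:R != 0 :> F by rewrite natr_neq0.
have tr_T : \tr (Tmat q.+1 A B) = - c * (n%:R - (2 * q.+1)%:R).
  rewrite TmatE linearB /= mxtrace_scalar -/c -[\tr M](divfK two_p_neq0) -/c.
  by rewrite mulNr mulrBr opprB [c * n%:R]mulr_natr.
rewrite tr_T TmatE -/c sqr_subr_scalar_mx.
  by rewrite mulfK ?natf_subr_neq0 // sqrrN.
rewrite -mulmxE contraction_mx_sqr /c mxtrace_contraction_simple; congr (_ *: _).
move: (eval_form B u) => b; rewrite natrM; field.
by rewrite addrC natr1 !natr_neq0.
Qed.

End SimpleContraction.

Theorem corollary1 (F : fieldType) (n p : nat) (A B : tensor F n) :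
  [pchar F] =i pred0 ->
  (0 < p)%N ->
  alternating p A -> alternating p B ->
  simple p A ->
  n <> (2 * p)%N ->
  forall k : nat, (0 < k)%N ->
    \tr (Tmat p A B ^+ k) =
      if ~~ odd k then
        n%:R / (n%:R - (2 * p)%:R) ^+ k * (\tr (Tmat p A B)) ^+ k
      else
        ((n%:R - (2 * p)%:R) ^+ k.-1)^-1 * (\tr (Tmat p A B)) ^+ k.
Proof.
move=> char0 p_gt0 _ B_alt [u A_simple] n_neq k _.
case: p p_gt0 B_alt u A_simple n_neq => [//|q] _ B_alt u A_simple /eqP n_neq.
have D_neq0 := natf_subr_neq0 char0 n_neq.
rewrite (mxtrace_exp_sqr_scalar _ (Tmat_sqr char0 B_alt A_simple n_neq)).
move: (\tr _) (_ - _) D_neq0 => tau D D_neq0.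
rewrite -[k](odd_double_half k) half_bit_double; move: (odd k) k./2 => b m.
rewrite oddD odd_double addbF -exprM mul2n expr_div_n.
case: b => /=; rewrite ?add0n ?add1n.
  by rewrite exprS; field; exact: expf_neq0.
by rewrite -mulr_natl; field; exact: expf_neq0.
Qed.
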